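(* Let $A$ be a finite alphabet with $|A|=n$ and $L\subseteq A^*$. Then for every $m\in\mathbb N$ the tuple $(m,\dots,m)$ is componentwise dominated by the Parikh image of some word of $L$ if and only if there is an enumeration $b_1,\dots,b_n$ of $A$ such that $b_1^*b_2^*\cdots b_n^*\subseteq \downarrow L$.
   Context: The Parikh image of $w$ is the vector of the numbers of occurrences of each symbol of $A$ in $w$ (in a fixed order). $\downarrow L=\{u\mid \exists v\in L,\ u \text{ is a subsequence of } v\}$ is the downward closure of $L$. *)

From mathcomp Require Import all_boot.
Set Implicit Arguments. Unset Strict Implicit. Unset Printing Implicit Defensive.

(* Parikh image of w over the finite alphabet A: the vector a |-> |w|_a
   (indexed by the letters of A instead of by a fixed order). *)
Definition parikh (A : finType) (w : seq A) : A -> nat := fun a => count_mem a w.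

Definition dclosure (A : finType) (L : seq A -> Prop) (u : seq A) : Prop :=
  exists2 v, L v & subseq u v.

(* u belongs to b_1^* b_2^* ... b_k^*  where bs = [:: b_1; ...; b_k]. *)
Definition star_prod (A : eqType) (bs : seq A) (u : seq A) : Prop :=
  exists2 ks : seq nat, size ks = size bs &
    u = flatten [seq nseq kb.2 kb.1 | kb <- zip bs ks].

From mathcomp Require Import all_boot.
From mathcomp Require Import zify.
From Stdlib Require Import Classical.
Set Implicit Arguments. Unset Strict Implicit. Unset Printing Implicit Defensive.

(* If every letter occurs at least m * n times in w (n = |A|), let b be the
   first letter to reach m occurrences in a prefix of w; every other letter
   still has at least m * (n - 1) occurrences after that prefix, so induction
   yields an enumeration bs of A with b_1^m ... b_n^m a subword of w.  Among
   the finitely many enumerations one works for infinitely many m, hence (the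
   property being downward closed in m) for all m, and every word of
   b_1^* ... b_n^* lies below some b_1^m ... b_n^m.  Conversely
   b_1^m ... b_n^m itself has Parikh image (m, ..., m). *)

Definition blocks (T : Type) (bs : seq T) (m : nat) : seq T :=
  flatten [seq nseq m b | b <- bs].

Lemma subseq_nseq_count (T : eqType) (b : T) (m : nat) (s : seq T) :
  m <= count_mem b s -> subseq (nseq m b) s.
Proof.
elim: s m => [|x s IHs] [|m] //= le_ms; try by rewrite sub0seq.
rewrite eq_sym in le_ms *.
by case: eqVneq le_ms => _ le_ms; [apply: IHs | apply: (IHs m.+1)].
Qed.

Lemma count_blocks (T : eqType) (bs : seq T) (m : nat) (a : T) :
  count_mem a (blocks bs m) = m * count_mem a bs.
Proof.
elim: bs => [|b bs IHbs] /=; first by rewrite muln0.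
by rewrite count_cat IHbs count_nseq mulnDr mulnC.
Qed.

Lemma subseq_blocks (T : eqType) (bs : seq T) (m M : nat) :
  m <= M -> subseq (blocks bs m) (blocks bs M).
Proof.
move=> le_mM; elim: bs => [|b bs IHbs] //=; apply: cat_subseq => //.
by apply: subseq_nseq_count; rewrite count_nseq /= eqxx mul1n.
Qed.

Lemma star_prod_blocks (T : eqType) (bs : seq T) (m : nat) :
  star_prod bs (blocks bs m).
Proof.
exists (nseq (size bs) m); first by rewrite size_nseq.
by rewrite /blocks; elim: bs => //= b bs ->.
Qed.

Lemma star_prod_subseq_blocks (T : eqType) (bs u : seq T) :
  star_prod bs u -> exists m, subseq u (blocks bs m).
Proof.
case=> ks size_ks ->; exists (sumn ks).
elim: bs ks size_ks => [|b bs IHbs] [|k ks] //= [/IHbs sub_ks].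
apply: cat_subseq.
  by apply: subseq_nseq_count; rewrite count_nseq /= eqxx mul1n leq_addr.
exact: subseq_trans sub_ks (subseq_blocks _ (leq_addl _ _)).
Qed.

Lemma dclosure_subseq (T : finType) (L : seq T -> Prop) (u v : seq T) :
  subseq u v -> dclosure L v -> dclosure L u.
Proof. by move=> sub_uv [w Lw sub_vw]; exists w => //; apply: subseq_trans sub_vw. Qed.

Lemma count_take_succ (T : eqType) (c : T) (i : nat) (w : seq T) :
  count_mem c (take i.+1 w) <= (count_mem c (take i w)).+1.
Proof.
rewrite -[i.+1]addn1 takeD count_cat -[(count_mem c _).+1]addn1 leq_add2l.
by apply: leq_trans (count_size _ _) _; rewrite size_take_min geq_minl.
Qed.

Lemma first_to_reach (T : eqType) (S w : seq T) (m : nat) :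
  has (fun c => m <= count_mem c w) S ->
  exists i b, [/\ b \in S, m <= count_mem b (take i w)
                & forall c, c \in S -> count_mem c (take i w) <= m].
Proof.
move=> reach; have reach_pref : exists i, has (fun c => m <= count_mem c (take i w)) S.
  by exists (size w); rewrite take_size.
case: (ex_minnP reach_pref) => i /hasP [b bS reach_b] min_i.
exists i, b; split=> // c cS; case: i min_i reach_b => [|i] min_i _.
  by rewrite take0.
have /hasPn/(_ c cS) : ~~ has (fun c => m <= count_mem c (take i w)) S.
  by apply/negP => /min_i; rewrite ltnn.
rewrite -ltnNge; exact: leq_trans (count_take_succ c i w).
Qed.

Lemma subseq_blocks_perm (T : eqType) (S w : seq T) (m : nat) : uniq S ->
  (forall c, c \in S -> m * size S <= count_mem c w) ->
  exists2 bs, perm_eq bs S & subseq (blocks bs m) w.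
Proof.
move sizeS: (size S) => n; elim: n S w sizeS => [|n IHn] S w sizeS uniq_S many_c.
  by exists [::]; rewrite ?sub0seq // (size0nil sizeS).
have /hasP [b0 b0S _] : has predT S by rewrite has_predT sizeS.
have [i [b [bS reach_b below_c]]] : exists i b, [/\ b \in S,
    m <= count_mem b (take i w) & forall c, c \in S -> count_mem c (take i w) <= m].
  apply: first_to_reach; apply/hasP; exists b0 => //.
  by apply: leq_trans (many_c b0 b0S); rewrite leq_pmulr.
have many_rest c : c \in rem b S -> m * n <= count_mem c (drop i w).
  move=> /mem_rem cS; have := many_c c cS.
  rewrite -{1}(cat_take_drop i w) count_cat mulnS; have := below_c c cS; lia.
have size_rest : size (rem b S) = n by rewrite size_rem // sizeS.
have [bs perm_bs sub_bs] := IHn _ (drop i w) size_rest (rem_uniq b uniq_S) many_rest.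
exists (b :: bs); first by rewrite (permPr (perm_to_rem bS)) perm_cons.
by rewrite -(cat_take_drop i w); apply: cat_subseq => //; apply: subseq_nseq_count.
Qed.

Lemma downward_finite_cover (T : eqType) (s : seq T) (P : T -> nat -> Prop) :
  (forall x m m', m' <= m -> P x m -> P x m') ->
  (forall m, exists2 x, x \in s & P x m) ->
  exists2 x, x \in s & forall m, P x m.
Proof.
move=> P_down; elim: s => [|x s IHs] cover; first by case: (cover 0).
have [Px|] := classic (forall m, P x m); first by exists x; rewrite ?mem_head.
move=> /not_all_ex_not [M notPxM].
have [y ys Py] : exists2 y, y \in s & forall m, P y m.
  apply: IHs => m; have [y] := cover (maxn m M).
  rewrite inE => /orP [/eqP -> /(P_down _ _ M (leq_maxr _ _)) //|ys Py].
  by exists y => //; apply: P_down Py; apply: leq_maxl.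
by exists y; rewrite // inE ys orbT.
Qed.

Theorem mainTheorem7 (A : finType) (L : seq A -> Prop) :
  (forall m : nat, exists2 w, L w & forall a : A, m <= parikh w a)
  <->
  (exists2 bs : seq A, perm_eq bs (enum A) &
     forall u : seq A, star_prod bs u -> dclosure L u).
Proof.
split=> [many_w | [bs perm_bs closed_bs] m].
- have cover m : exists2 bs, bs \in permutations (enum A) & dclosure L (blocks bs m).
    have [w Lw many_a] := many_w (m * size (enum A)).
    have [bs perm_bs sub_bs] := subseq_blocks_perm (enum_uniq A) (fun c _ => many_a c).
    by exists bs; [rewrite mem_permutations | exists w].
  have [bs] := downward_finite_cover
    (fun bs m m' le_m'm => dclosure_subseq (subseq_blocks bs le_m'm)) cover.
  rewrite mem_permutations => perm_bs closed_bs.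
  exists bs => // u /star_prod_subseq_blocks [m sub_u].
  exact: dclosure_subseq sub_u (closed_bs m).
- have [w Lw sub_w] := closed_bs _ (star_prod_blocks bs m).
  exists w => // a; apply: leq_trans (leq_count_subseq _ sub_w).
  by rewrite count_blocks (permP perm_bs) count_uniq_mem ?enum_uniq // mem_enum muln1.
Qed.
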